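(* For almost every $\mathbf{U}$ (in the setup below) there exists a unique canonical structured basis of $\mathbf{U}$. That is, there is exactly one $\mathbf{V}\in\mathbb{R}^{n\times r}$ which is a structured basis of $\mathbf{U}$ and also satisfies the canonical pattern.
   Context: Setup: Let $n,m_1,m_2$ be positive integers and $r,r_1,r_2$ integers with $1\le r_1,r_2\le r\le \min\{n,r_1+r_2\}$. The matrix $\mathbf{U}=[\mathbf{U}_1|\mathbf{U}_2]\in\mathbb{R}^{n\times(m_1+m_2)}$ has first view $\mathbf{U}_1\in\mathbb{R}^{n\times m_1}$ and second view $\mathbf{U}_2\in\mathbb{R}^{n\times m_2}$, and satisfies $\mathrm{rank}(\mathbf{U}_1)=r_1$, $\mathrm{rank}(\mathbf{U}_2)=r_2$, $\mathrm{rank}(\mathbf{U})=r$. ''For almost every $\mathbf{U}$'' means: outside a Lebesgue-null subset of the set of such matrices. Set $r_1'=r-r_2$, $r_2'=r-r_1$, $r'=r_1+r_2-r$. A structured basis of $\mathbf{U}$ is a matrix $\mathbf{V}=[\mathbf{V}_1|\mathbf{V}_2|\mathbf{V}_3]\in\mathbb{R}^{n\times r}$ with $\mathbf{V}_1\in\mathbb{R}^{n\times r_1'}$, $\mathbf{V}_2\in\mathbb{R}^{n\times r'}$, $\mathbf{V}_3\in\mathbb{R}^{n\times r_2'}$, such that: - the columns of $[\mathbf{V}_1|\mathbf{V}_2]$ form a basis of the column space of $\mathbf{U}_1$; - the columns of $[\mathbf{V}_2|\mathbf{V}_3]$ form a basis of the column space of $\mathbf{U}_2$; - the columns of $\mathbf{V}$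 form a basis of the column space of $\mathbf{U}$. Canonical pattern: let $M=\max(r_1',r_2')$ and let $R=\{M+1,\dots,M+r'\}$ (a set of row indices). Then $\mathbf{V}$ satisfies the canonical pattern if: - $\mathbf{V}(1{:}r_1',\,1{:}r_1')=\mathbf{I}_{r_1'}$; - $\mathbf{V}(1{:}r_2',\,r_1+1{:}r_1+r_2')=\mathbf{I}_{r_2'}$; - $\mathbf{V}(R,\,r_1'+1{:}r_1'+r')=\mathbf{I}_{r'}$; - $\mathbf{V}(R,\,1{:}r_1')=\mathbf{0}_{r'\times r_1'}$; - $\mathbf{V}(R,\,r_1+1{:}r_1+r_2')=\mathbf{0}_{r'\times r_2'}$. *)

(* classical real numbers R.  Matrices are represented as
   functions nat -> nat -> R; only the entries with row index < #rows and
   column index < #cols are meaningful. *)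
From Stdlib Require Import Reals Arith.
Open Scope R_scope.

Definition vec := nat -> R.
Definition mat := nat -> nat -> R.

Fixpoint sumR (k : nat) (f : nat -> R) : R :=
  match k with O => 0 | S k' => sumR k' f + f k' end.
Fixpoint prodR (k : nat) (f : nat -> R) : R :=
  match k with O => 1 | S k' => prodR k' f * f k' end.

Definition in_colspace (n m : nat) (A : mat) (v : vec) : Prop :=
  exists c : vec, forall i, (i < n)%nat -> v i = sumR m (fun j => c j * A i j).

Definition lin_indep (n k : nat) (B : mat) : Prop :=
  forall c : vec,
    (forall i, (i < n)%nat -> sumR k (fun j => c j * B i j) = 0) ->
    forall j, (j < k)%nat -> c j = 0.

Definition is_colbasis (n k : nat) (B : mat) (m : nat) (A : mat) : Prop :=
  (forall j, (j < k)%nat -> in_colspace n m A (fun i => B i j)) /\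
  lin_indep n k B /\
  (forall v, in_colspace n m A v -> in_colspace n k B v).

Definition rank_eq (n m : nat) (A : mat) (r : nat) : Prop :=
  exists B : mat, is_colbasis n r B m A.

(* the views of U = [U1 | U2] *)
Definition view1 (U : mat) : mat := U.
Definition view2 (m1 : nat) (U : mat) : mat := fun i j => U i (m1 + j)%nat.

Definition kdelta (i j : nat) : R := if Nat.eqb i j then 1 else 0.

(* V = [V1|V2|V3] (n x r) is a structured basis of U = [U1|U2];
   V1 = columns 0..r1'-1, V2 = columns r1'..r1-1, V3 = columns r1..r-1 *)
Definition structured_basis (n m1 m2 r1 r2 r : nat) (U V : mat) : Prop :=
  let r1' := (r - r2)%nat in
  is_colbasis n r1 V m1 (view1 U) /\
  is_colbasis n r2 (fun i j => V i (r1' + j)%nat) m2 (view2 m1 U) /\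
  is_colbasis n r V (m1 + m2) U.

(* canonical pattern, translated to 0-based indices: rows 1..k become
   0..k-1, and R = {M+1,...,M+r'} becomes {M,...,M+r'-1} *)
Definition canonical_pattern (r1 r2 r : nat) (V : mat) : Prop :=
  let r1' := (r - r2)%nat in
  let r2' := (r - r1)%nat in
  let r' := (r1 + r2 - r)%nat in
  let M := Nat.max r1' r2' in
  (forall i j, (i < r1')%nat -> (j < r1')%nat -> V i j = kdelta i j) /\
  (forall i j, (i < r2')%nat -> (j < r2')%nat -> V i (r1 + j)%nat = kdelta i j) /\
  (forall a b, (a < r')%nat -> (b < r')%nat -> V (M + a)%nat (r1' + b)%nat = kdelta a b) /\
  (forall a j, (a < r')%nat -> (j < r1')%nat -> V (M + a)%nat j = 0) /\
  (forall a j, (a < r')%nat -> (j < r2')%nat -> V (M + a)%nat (r1 + j)%nat = 0).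

Definition unique_canonical_basis (n m1 m2 r1 r2 r : nat) (U : mat) : Prop :=
  exists V : mat,
    (structured_basis n m1 m2 r1 r2 r U V /\ canonical_pattern r1 r2 r V) /\
    forall W : mat,
      structured_basis n m1 m2 r1 r2 r U W /\ canonical_pattern r1 r2 r W ->
      forall i j, (i < n)%nat -> (j < r)%nat -> W i j = V i j.

(* Lebesgue-null subsets of R^N (sets of x : nat -> R depending on the
   coordinates x 0, ..., x (N-1)): for every eps > 0 there is a countable
   family of closed boxes covering E with total volume <= eps. *)
Definition null_set (N : nat) (E : (nat -> R) -> Prop) : Prop :=
  forall eps : R, 0 < eps ->
  exists a b : nat -> nat -> R,
    (forall k i, a k i <= b k i) /\
    (forall x, E x -> exists k, forall i, (i < N)%nat -> a k i <= x i <= b k i) /\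
    (forall K, sumR K (fun k => prodR N (fun i => b k i - a k i)) <= eps).

(* Natural (polynomial, surjective, submersive) parametrization of the set of
   matrices U = [U1|U2] with rank U1 = r1, rank U2 = r2, rank U = r:
   parameters W (n x r), G1 (r1 x m1), G2 (r2 x m2), flattened into R^N, and
     U1 = W(:, 0..r1-1) G1,   U2 = W(:, r1'..r-1) G2.
   "Almost every U" = outside a set whose preimage under this map is
   Lebesgue-null. *)
Definition param_dim (n m1 m2 r1 r2 r : nat) : nat :=
  (n * r + r1 * m1 + r2 * m2)%nat.

Definition param_U (n m1 m2 r1 r2 r : nat) (x : nat -> R) : mat :=
  let r1' := (r - r2)%nat in
  let W := fun i k => x (i * r + k)%nat in
  let G1 := fun a b => x (n * r + a * m1 + b)%nat in
  let G2 := fun a b => x (n * r + r1 * m1 + a * m2 + b)%nat in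
  fun i j =>
    if Nat.ltb j m1 then sumR r1 (fun k => W i k * G1 k j)
    else sumR r2 (fun k => W i (r1' + k)%nat * G2 k (j - m1)%nat).

(* In the parametrization U1 = W1 G1, U2 = W2 G2, where W1 and W2 are the first r1 and
   the last r2 columns of W, overlapping in a middle block W12 of r' columns.  With the
   prescribed ranks, col U1 = col W1, col U2 = col W2 and W has independent columns, so
   col U1 and col U2 meet in col W12.  A canonical structured basis must therefore take
   V1, V2, V3 from W1 F1^-1, W12 F2^-1 and W2 F3^-1, where each F is the square minor on
   the rows where the pattern prescribes an identity; when the three minors are invertible
   these matrices do form the unique canonical structured basis.  It remains to see that
   the zero set of a determinant of distinct coordinates is null: expanding along an entry
   x_t gives x_t C + R with C, R independent of x_t; where C = 0 induction applies, and
   where C <> 0 the set is a countable union of Lipschitz graphs over the other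
   coordinates, each covered by boxes above the cells of a fine grid. *)

From Stdlib Require Import Reals Arith Lia Lra ClassicalEpsilon.
From mathcomp Require all_boot all_algebra perm Rstruct.
Open Scope R_scope.

Lemma sumR_ext k f g : (forall i, (i < k)%nat -> f i = g i) -> sumR k f = sumR k g.
Proof.
  induction k as [|k IH]; intros E; simpl; [reflexivity|].
  f_equal; [apply IH; intros; apply E|apply E]; lia.
Qed.

Lemma sumR_le k f g : (forall i, (i < k)%nat -> f i <= g i) -> sumR k f <= sumR k g.
Proof.
  induction k as [|k IH]; intros H; simpl; [lra|].
  apply Rplus_le_compat; [apply IH; intros; apply H|apply H]; lia.
Qed.

Lemma sumR_eq0 k f : (forall i, (i < k)%nat -> f i = 0) -> sumR k f = 0.
Proof.
  induction k as [|k IH]; intros H; simpl; [reflexivity|].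
  rewrite IH, H; [lra|lia|intros; apply H; lia].
Qed.

Lemma sumR_ge0 k f : (forall i, (i < k)%nat -> 0 <= f i) -> 0 <= sumR k f.
Proof. intros H. rewrite <- (sumR_eq0 k (fun _ => 0)) by auto. now apply sumR_le. Qed.

Lemma sumR_add k f g : sumR k (fun i => f i + g i) = sumR k f + sumR k g.
Proof. induction k as [|k IH]; simpl; [lra|]. rewrite IH; lra. Qed.

Lemma sumR_sub k f g : sumR k (fun i => f i - g i) = sumR k f - sumR k g.
Proof. induction k as [|k IH]; simpl; [lra|]. rewrite IH; lra. Qed.

Lemma sumR_mull k c f : sumR k (fun i => c * f i) = c * sumR k f.
Proof. induction k as [|k IH]; simpl; [lra|]. rewrite IH; lra. Qed.

Lemma sumR_split a b f : sumR (a + b) f = sumR a f + sumR b (fun i => f (a + i)%nat).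
Proof.
  induction b as [|b IH]; simpl; [rewrite Nat.add_0_r; lra|].
  rewrite Nat.add_succ_r; simpl; rewrite IH; lra.
Qed.

Lemma sumR_widen k1 k2 f : (k1 <= k2)%nat -> (forall i, 0 <= f i) -> sumR k1 f <= sumR k2 f.
Proof.
  intros Hk Hf. replace k2 with (k1 + (k2 - k1))%nat by lia.
  rewrite sumR_split.
  enough (0 <= sumR (k2 - k1) (fun i => f (k1 + i)%nat)) by lra. apply sumR_ge0; auto.
Qed.

Lemma sumR_swap p q f :
  sumR p (fun i => sumR q (fun j => f i j)) = sumR q (fun j => sumR p (fun i => f i j)).
Proof.
  induction p as [|p IH]; simpl; [symmetry; now apply sumR_eq0|].
  now rewrite IH, <- sumR_add.
Qed.

Lemma kdelta_sym a b : kdelta a b = kdelta b a.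
Proof. unfold kdelta. now rewrite Nat.eqb_sym. Qed.

Lemma kdelta_neq a b : a <> b -> kdelta a b = 0.
Proof. intros H. unfold kdelta. now rewrite (proj2 (Nat.eqb_neq a b) H). Qed.

Lemma sumR_kdelta k i c : (i < k)%nat -> sumR k (fun j => kdelta i j * c j) = c i.
Proof.
  induction k as [|k IH]; intros Hi; [lia|]. simpl.
  destruct (Nat.eq_dec i k) as [->|Hik].
  - rewrite sumR_eq0 by (intros j Hj; rewrite kdelta_neq by lia; ring).
    unfold kdelta; rewrite Nat.eqb_refl; ring.
  - rewrite IH, kdelta_neq by lia; ring.
Qed.

Lemma sumR_kdelta_r k i c : (i < k)%nat -> sumR k (fun j => c j * kdelta i j) = c i.
Proof. intros Hi. rewrite <- (sumR_kdelta k i c Hi). apply sumR_ext; intros; ring. Qed.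

Lemma prodR_ext k f g : (forall i, (i < k)%nat -> f i = g i) -> prodR k f = prodR k g.
Proof.
  induction k as [|k IH]; intros E; simpl; [reflexivity|].
  f_equal; [apply IH; intros; apply E|apply E]; lia.
Qed.

Lemma prodR_ge0 k f : (forall i, (i < k)%nat -> 0 <= f i) -> 0 <= prodR k f.
Proof.
  induction k as [|k IH]; intros H; simpl; [lra|].
  apply Rmult_le_pos; [apply IH; intros|]; apply H; lia.
Qed.

Lemma prodR_eq0 k f i : (i < k)%nat -> f i = 0 -> prodR k f = 0.
Proof.
  induction k as [|k IH]; intros Hi Hf; [lia|]. simpl.
  destruct (Nat.eq_dec i k) as [->|Hik]; [rewrite Hf|rewrite IH by (exact Hf || lia)]; ring.
Qed.

Lemma prodR_const_except N t h c : (t < N)%nat ->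
  prodR N (fun i => if Nat.eqb i t then c else h) = h ^ (N - 1) * c.
Proof.
  induction N as [|N IH]; intros Ht; [lia|]. simpl prodR.
  destruct (Nat.eq_dec t N) as [->|HtN].
  - rewrite Nat.eqb_refl, (prodR_ext _ _ (fun _ => h)).
    + replace (S N - 1)%nat with N by lia. f_equal.
      clear. induction N as [|N IH]; simpl; [lra|]. rewrite IH; lra.
    + intros i Hi. now rewrite (proj2 (Nat.eqb_neq i N)) by lia.
  - rewrite IH, (proj2 (Nat.eqb_neq N t)) by lia.
    replace (S N - 1)%nat with (S (N - 1)) by lia. simpl; ring.
Qed.

Lemma ltb_true a b : (a < b)%nat -> Nat.ltb a b = true.
Proof. apply Nat.ltb_lt. Qed.

Lemma ltb_false a b : (b <= a)%nat -> Nat.ltb a b = false.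
Proof. apply Nat.ltb_ge. Qed.

Lemma add_sub_l a b : (a + b - a = b)%nat.
Proof. lia. Qed.

(** * Null sets *)

Lemma null_set_subset N (E F : (nat -> R) -> Prop) :
  (forall x, E x -> F x) -> null_set N F -> null_set N E.
Proof.
  intros HEF HF eps Heps. destruct (HF eps Heps) as (a & b & Hab & Hcov & Hvol).
  exists a, b; split; [|split]; auto.
Qed.

Lemma null_set_empty N (E : (nat -> R) -> Prop) :
  (1 <= N)%nat -> (forall x, ~ E x) -> null_set N E.
Proof.
  intros HN HE eps Heps. exists (fun _ _ => 0), (fun _ _ => 0). split; [|split].
  - intros; lra.
  - intros x Hx; destruct (HE x Hx).
  - intros K. rewrite sumR_eq0; [lra|]. intros k _. apply (prodR_eq0 _ _ 0); [lia|ring].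
Qed.

Fixpoint triangle (d : nat) : nat := match d with O => O | S d' => (triangle d' + S d')%nat end.

Fixpoint unpair (n : nat) : nat * nat :=
  match n with
  | O => (O, O)
  | S n' => let (k, j) := unpair n' in
            match j with O => (O, S k) | S j' => (S k, j') end
  end.

Lemma unpair_triangle d k : (k <= d)%nat -> unpair (triangle d + k) = (k, d - k)%nat.
Proof.
  revert k; induction d as [|d IHd]; intros k Hk.
  - now replace k with O by lia.
  - induction k as [|k IHk].
    + replace (triangle (S d) + 0)%nat with (S (triangle d + d)) by (simpl; lia).
      cbn [unpair]. rewrite IHd, Nat.sub_diag by lia. f_equal; lia.
    + replace (triangle (S d) + S k)%nat with (S (triangle (S d) + k)) by lia.
      cbn [unpair]. rewrite IHk by lia.
      destruct (S d - k)%nat eqn:E; [lia|]. f_equal; lia.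
Qed.

Lemma sumR_triangle M g :
  sumR (triangle M) (fun n => let (k, j) := unpair n in g k j) =
  sumR M (fun k => sumR (M - k) (g k)).
Proof.
  induction M as [|M IH]; [reflexivity|].
  simpl triangle. rewrite sumR_split, IH.
  rewrite (sumR_ext (S M) _ (fun k => g k (M - k)%nat))
    by (intros k Hk; now rewrite unpair_triangle by lia).
  transitivity (sumR (S M) (fun k => sumR (M - k) (g k) + g k (M - k)%nat)).
  - rewrite sumR_add. simpl. rewrite Nat.sub_diag. simpl. lra.
  - apply sumR_ext. intros k Hk. replace (S M - k)%nat with (S (M - k)) by lia. reflexivity.
Qed.

Lemma sumR_geometric eps M : sumR M (fun k => eps / 2 ^ S k) = eps - eps / 2 ^ M.
Proof.
  induction M as [|M IH]; [simpl; field|].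
  change (sumR (S M) (fun k => eps / 2 ^ S k))
    with (sumR M (fun k => eps / 2 ^ S k) + eps / 2 ^ S M).
  rewrite IH. simpl. field. apply pow_nonzero; lra.
Qed.

Lemma null_set_countable_union N (E : nat -> (nat -> R) -> Prop) :
  (forall k, null_set N (E k)) -> null_set N (fun x => exists k, E k x).
Proof.
  intros H eps Heps.
  assert (Hcov : forall k, exists ab : (nat -> nat -> R) * (nat -> nat -> R),
     (forall j i, fst ab j i <= snd ab j i) /\
     (forall x, E k x -> exists j, forall i, (i < N)%nat -> fst ab j i <= x i <= snd ab j i) /\
     (forall K, sumR K (fun j => prodR N (fun i => snd ab j i - fst ab j i)) <= eps / 2 ^ S k)).
  { intros k. assert (Hk : 0 < eps / 2 ^ S k) by (apply Rdiv_lt_0_compat; [lra|apply pow_lt; lra]).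
    destruct (H k _ Hk) as (a & b & Hab). now exists (a, b). }
  destruct (choice _ Hcov) as [ab Hab].
  set (vol k j := prodR N (fun i => snd (ab k) j i - fst (ab k) j i)).
  assert (Hvol : forall k j, 0 <= vol k j).
  { intros k j. apply prodR_ge0. intros i _. destruct (Hab k) as [Hle _]. specialize (Hle j i). lra. }
  exists (fun n i => let (k, j) := unpair n in fst (ab k) j i).
  exists (fun n i => let (k, j) := unpair n in snd (ab k) j i).
  split; [|split].
  - intros n i. destruct (unpair n) as [k j]. apply (Hab k).
  - intros x [k Hx]. destruct (Hab k) as (_ & Hin & _). destruct (Hin x Hx) as [j Hj].
    exists (triangle (k + j) + k)%nat. rewrite unpair_triangle by lia.
    now replace (k + j - k)%nat with j by lia.
  - intros K.
    apply Rle_trans with (sumR (triangle K) (fun n => let (k, j) := unpair n in vol k j)).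
    { rewrite (sumR_ext K _ (fun n => let (k, j) := unpair n in vol k j))
        by (intros n _; now destruct (unpair n)).
      apply sumR_widen; [|intros n; now destruct (unpair n)].
      induction K; simpl; lia. }
    rewrite sumR_triangle. apply Rle_trans with (sumR K (fun k => eps / 2 ^ S k)).
    + apply sumR_le. intros k _. apply (Hab k).
    + rewrite sumR_geometric.
      enough (0 < eps / 2 ^ K) by lra. apply Rdiv_lt_0_compat; [lra|apply pow_lt; lra].
Qed.

Lemma null_set_union N (E F : (nat -> R) -> Prop) :
  null_set N E -> null_set N F -> null_set N (fun x => E x \/ F x).
Proof.
  intros HE HF.
  apply null_set_subset with (fun x => exists k, match k with O => E x | _ => F x end).
  - intros x [Hx|Hx]; [now exists O|now exists 1%nat].
  - apply null_set_countable_union. now intros [|k].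
Qed.

(** * Lipschitz graphs are null *)

Fixpoint digit (K n j : nat) : nat :=
  match j with O => (n mod K)%nat | S j' => digit K (n / K) j' end.

Fixpoint encode (K : nat) (g : nat -> nat) (D : nat) : nat :=
  match D with O => O | S D' => (g O + K * encode K (fun j => g (S j)) D')%nat end.

Lemma encode_spec K D g : (forall j, (j < D)%nat -> (g j < K)%nat) ->
  (encode K g D < K ^ D)%nat /\ forall j, (j < D)%nat -> digit K (encode K g D) j = g j.
Proof.
  revert g; induction D as [|D IH]; intros g Hg; simpl; [split; lia|].
  destruct (IH (fun j => g (S j))) as [Hlt Hdig]; [intros; apply Hg; lia|].
  assert (Hg0 : (g O < K)%nat) by (apply Hg; lia).
  split; [nia|]. intros [|j] Hj; simpl.
  - symmetry. apply (Nat.mod_unique _ _ (encode K (fun j => g (S j)) D)); lia.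
  - replace ((g O + K * encode K (fun j => g (S j)) D) / K)%nat
      with (encode K (fun j => g (S j)) D) by (apply (Nat.div_unique _ _ _ (g O)); lia).
    apply Hdig; lia.
Qed.

Definition skip (t i : nat) : nat := if Nat.ltb i t then i else (i - 1)%nat.
Definition unskip (t j : nat) : nat := if Nat.ltb j t then j else S j.

Lemma skip_lt N t i : (t < N)%nat -> (i < N)%nat -> i <> t -> (skip t i < N - 1)%nat.
Proof. unfold skip; intros; destruct (Nat.ltb_spec i t); lia. Qed.

Lemma unskip_lt N t j : (j < N - 1)%nat -> (unskip t j < N)%nat /\ unskip t j <> t.
Proof. unfold unskip; intros; destruct (Nat.ltb_spec j t); lia. Qed.

Lemma unskipK t i : i <> t -> unskip t (skip t i) = i.
Proof.
  unfold skip, unskip; intros.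
  destruct (Nat.ltb_spec i t), (Nat.ltb_spec (i - 1) t), (Nat.ltb_spec i t); lia.
Qed.

Lemma Rabs_le_inv a b : Rabs a <= b -> - b <= a <= b.
Proof. unfold Rabs; destruct (Rcase_abs a); lra. Qed.

Lemma interval_cell K h w : (1 <= K)%nat -> 0 <= h -> 0 <= w <= INR K * h ->
  exists g, (g < K)%nat /\ INR g * h <= w <= INR g * h + h.
Proof.
  induction K as [|K IH]; intros HK Hh Hw; [lia|].
  destruct (Nat.eq_dec K 0) as [->|HK0]; [exists O; simpl in *; split; [lia|lra]|].
  destruct (Rle_dec w (INR K * h)).
  - destruct IH as (g & Hg & Hgw); [lia|auto|lra|]. exists g; split; [lia|lra].
  - rewrite S_INR in Hw. exists K; split; [lia|lra].
Qed.

(* Lower corner, in coordinate [i <> t], of the [n]-th cell of the grid of mesh [h]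
   on the cube [[-m, m]]: the cells are numbered by the base-[K] digits of [n]. *)
Definition grid_lo (m h : R) (K t n i : nat) : R := - m + INR (digit K n (skip t i)) * h.

Lemma grid_cell_exists N t K (m h : R) (x : nat -> R) :
  (t < N)%nat -> (1 <= K)%nat -> 0 <= h -> INR K * h = 2 * m ->
  (forall i, (i < N)%nat -> i <> t -> Rabs (x i) <= m) ->
  exists n, (n < K ^ (N - 1))%nat /\ forall i, (i < N)%nat -> i <> t ->
    grid_lo m h K t n i <= x i <= grid_lo m h K t n i + h.
Proof.
  intros Ht HK Hh HKh Hx.
  assert (Hcell : forall j, exists g, (j < N - 1)%nat ->
    (g < K)%nat /\ INR g * h <= x (unskip t j) + m <= INR g * h + h).
  { intros j. destruct (Nat.lt_ge_cases j (N - 1)) as [Hj|Hj]; [|exists O; lia].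
    destruct (unskip_lt N t j Hj) as [Hu Hut].
    pose proof (Rabs_le_inv _ _ (Hx _ Hu Hut)) as Hb.
    destruct (interval_cell K h (x (unskip t j) + m)) as (g & Hg); auto; [lra|].
    now exists g. }
  destruct (choice _ Hcell) as [g Hg].
  destruct (encode_spec K (N - 1) g) as [Hlt Hdig]; [intros j Hj; apply Hg, Hj|].
  exists (encode K g (N - 1)); split; auto.
  intros i Hi Hit. unfold grid_lo. rewrite Hdig by (apply skip_lt; auto).
  destruct (Hg (skip t i)) as [_ Hgi]; [apply skip_lt; auto|].
  rewrite unskipK in Hgi by auto. lra.
Qed.

Lemma div_nat_small c eps : 0 < eps -> exists K, (1 <= K)%nat /\ c / INR K <= eps.
Proof.
  intros Heps. destruct (INR_unbounded (c / eps)) as [K0 HK0].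
  assert (HK : INR K0 < INR (S K0)) by (apply lt_INR; lia).
  assert (0 < INR (S K0)) by (rewrite S_INR; pose proof (pos_INR K0); lra).
  exists (S K0). split; [lia|].
  apply Rmult_le_reg_r with (INR (S K0)); auto. unfold Rdiv. rewrite Rmult_assoc, Rinv_l by lra.
  apply Rmult_le_reg_r with (/ eps); [apply Rinv_0_lt_compat; lra|].
  replace (eps * INR (S K0) * / eps) with (INR (S K0)) by (field; lra). unfold Rdiv in HK0. lra.
Qed.

Lemma sumR_le_support (f : nat -> R) K c :
  0 <= c -> (forall n, (n < K)%nat -> f n <= c) -> (forall n, (K <= n)%nat -> f n = 0) ->
  forall L, sumR L f <= INR K * c.
Proof.
  intros Hc Hlt Hge L. apply Rle_trans with (INR (Nat.min L K) * c).
  - induction L as [|L IH]; simpl sumR; [simpl; lra|].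
    destruct (Nat.lt_ge_cases L K) as [HL|HL].
    + replace (Nat.min (S L) K) with (S (Nat.min L K)) by lia.
      rewrite S_INR. specialize (Hlt L HL). lra.
    + replace (Nat.min (S L) K) with (Nat.min L K) by lia. rewrite Hge by lia. lra.
  - apply Rmult_le_compat_r; auto. apply le_INR; lia.
Qed.

(* A set whose coordinate [t] is a [Lam]-Lipschitz function of the other (bounded)
   coordinates is covered, for a grid of mesh [h] on the other coordinates, by one box
   of height [2 Lam h] above each cell. *)
Lemma lipschitz_graph_null N t (m Lam : R) (E : (nat -> R) -> Prop) :
  (t < N)%nat -> 0 <= m -> 0 <= Lam ->
  (forall x, E x -> forall i, (i < N)%nat -> i <> t -> Rabs (x i) <= m) ->
  (forall x y h, E x -> E y -> 0 <= h ->
     (forall i, (i < N)%nat -> i <> t -> Rabs (x i - y i) <= h) -> Rabs (x t - y t) <= Lam * h) ->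
  null_set N E.
Proof.
  intros Ht Hm HLam Hbd Hlip eps Heps.
  set (D := (N - 1)%nat).
  set (c0 := (2 * m) ^ D * (2 * Lam) * (2 * m)).
  destruct (div_nat_small c0 eps Heps) as (K & HK1 & HKc).
  assert (HK : 0 < INR K) by (apply lt_0_INR; lia).
  set (h := 2 * m / INR K).
  assert (Hh : 0 <= h) by (unfold h; apply Rmult_le_pos; [lra|left; apply Rinv_0_lt_compat; lra]).
  assert (HKh : INR K * h = 2 * m) by (unfold h; field; lra).
  set (cell n y := forall i, (i < N)%nat -> i <> t ->
                     grid_lo m h K t n i <= y i <= grid_lo m h K t n i + h).
  set (rep n := epsilon (inhabits (fun _ => 0)) (fun y => cell n y /\ E y)).
  exists (fun n i => if Nat.ltb n (K ^ D) then
            if Nat.eqb i t then rep n t - Lam * h else grid_lo m h K t n i else 0).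
  exists (fun n i => if Nat.ltb n (K ^ D) then
            if Nat.eqb i t then rep n t + Lam * h else grid_lo m h K t n i + h else 0).
  assert (HLh : 0 <= Lam * h) by (apply Rmult_le_pos; auto).
  split; [|split].
  - intros n i. destruct (Nat.ltb n (K ^ D)), (Nat.eqb i t); lra.
  - intros x Hx.
    destruct (grid_cell_exists N t K m h x) as (n & Hn & Hxn); auto.
    assert (Hyn : cell n (rep n) /\ E (rep n)) by (apply epsilon_spec; now exists x).
    fold D in Hn. exists n. intros i Hi. rewrite ltb_true by auto.
    destruct (Nat.eqb_spec i t) as [->|Hit]; [|now apply Hxn].
    enough (Rabs (x t - rep n t) <= Lam * h) by (apply Rabs_le_inv in H; lra).
    apply Hlip; [auto|apply Hyn|lra|]. intros j Hj Hjt. apply Rabs_le.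
    specialize (Hxn j Hj Hjt). specialize (proj1 Hyn j Hj Hjt). lra.
  - intros L. apply Rle_trans with (INR (K ^ D) * (h ^ D * (2 * Lam * h))).
    + apply sumR_le_support.
      * apply Rmult_le_pos; [apply pow_le|]; lra.
      * intros n Hn. rewrite ltb_true by auto. right.
        unfold D. rewrite <- (prodR_const_except N t) by auto.
        apply prodR_ext. intros i _. destruct (Nat.eqb i t); ring.
      * intros n Hn. rewrite ltb_false by auto.
        apply (prodR_eq0 _ _ t); auto. ring.
    + rewrite pow_INR, <- Rmult_assoc, <- Rpow_mult_distr, HKh.
      replace ((2 * m) ^ D * (2 * Lam * h)) with (c0 / INR K) by (unfold c0, h; field; lra).
      exact HKc.
Qed.

Definition lipschitz_on_cube N (m L B : R) (F : (nat -> R) -> R) : Prop :=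
  forall x y h, 0 <= h ->
    (forall i, (i < N)%nat -> Rabs (x i) <= m /\ Rabs (y i) <= m /\ Rabs (x i - y i) <= h) ->
    Rabs (F x) <= B /\ Rabs (F x - F y) <= L * h.

Definition locally_lipschitz N (F : (nat -> R) -> R) : Prop :=
  forall m, 0 <= m -> exists L B, 0 <= L /\ 0 <= B /\ lipschitz_on_cube N m L B F.

Lemma locally_lipschitz_ext N F G :
  (forall x, F x = G x) -> locally_lipschitz N F -> locally_lipschitz N G.
Proof.
  intros E HF m Hm. destruct (HF m Hm) as (L & B & HL & HB & H).
  exists L, B; split; [|split]; auto.
  intros x y h Hh Hxy. rewrite <- !E. now apply H.
Qed.

Lemma locally_lipschitz_const N c : locally_lipschitz N (fun _ => c).
Proof.
  intros m Hm. exists 0, (Rabs c). split; [lra|split; [apply Rabs_pos|]].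
  intros x y h Hh _. rewrite Rminus_diag, Rabs_R0. lra.
Qed.

Lemma locally_lipschitz_coord N i : (i < N)%nat -> locally_lipschitz N (fun x => x i).
Proof.
  intros Hi m Hm. exists 1, m. split; [lra|split; [lra|]].
  intros x y h Hh H. destruct (H i Hi) as (Hx & Hy & Hxy). split; lra.
Qed.

Lemma locally_lipschitz_add N F G :
  locally_lipschitz N F -> locally_lipschitz N G -> locally_lipschitz N (fun x => F x + G x).
Proof.
  intros HF HG m Hm.
  destruct (HF m Hm) as (L1 & B1 & HL1 & HB1 & H1), (HG m Hm) as (L2 & B2 & HL2 & HB2 & H2).
  exists (L1 + L2), (B1 + B2). split; [lra|split; [lra|]].
  intros x y h Hh H. destruct (H1 x y h Hh H), (H2 x y h Hh H). split.
  - eapply Rle_trans; [apply Rabs_triang|lra].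
  - replace (F x + G x - (F y + G y)) with ((F x - F y) + (G x - G y)) by ring.
    eapply Rle_trans; [apply Rabs_triang|lra].
Qed.

Lemma locally_lipschitz_mul N F G :
  locally_lipschitz N F -> locally_lipschitz N G -> locally_lipschitz N (fun x => F x * G x).
Proof.
  intros HF HG m Hm.
  destruct (HF m Hm) as (L1 & B1 & HL1 & HB1 & H1), (HG m Hm) as (L2 & B2 & HL2 & HB2 & H2).
  exists (B1 * L2 + B2 * L1), (B1 * B2).
  split; [apply Rplus_le_le_0_compat; apply Rmult_le_pos; auto|split; [apply Rmult_le_pos; auto|]].
  intros x y h Hh H.
  assert (Hyx : forall i, (i < N)%nat -> Rabs (y i) <= m /\ Rabs (x i) <= m /\ Rabs (y i - x i) <= h)
    by (intros i Hi; rewrite Rabs_minus_sym; destruct (H i Hi) as (? & ? & ?); auto).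
  destruct (H1 x y h Hh H) as [Fx dF], (H2 x y h Hh H) as [Gx dG], (H2 y x h Hh Hyx) as [Gy _].
  split.
  - rewrite Rabs_mult. apply Rmult_le_compat; auto using Rabs_pos.
  - replace (F x * G x - F y * G y) with (F x * (G x - G y) + G y * (F x - F y)) by ring.
    eapply Rle_trans; [apply Rabs_triang|]. rewrite !Rabs_mult, Rmult_plus_distr_r, !Rmult_assoc.
    apply Rplus_le_compat; apply Rmult_le_compat; auto using Rabs_pos.
Qed.

Definition upd (x : nat -> R) (t : nat) (u : R) : nat -> R :=
  fun i => if Nat.eqb i t then u else x i.

Lemma upd_neq x t u i : i <> t -> upd x t u i = x i.
Proof. intros H. unfold upd. now rewrite (proj2 (Nat.eqb_neq i t) H). Qed.

Definition indep_of (t : nat) (F : (nat -> R) -> R) : Prop := forall x u, F (upd x t u) = F x.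

Definition implicit_piece N t (C Rr : (nat -> R) -> R) (m : R) (x : nat -> R) : Prop :=
  (forall i, (i < N)%nat -> i <> t -> Rabs (x i) <= m) /\
  / (m + 1) <= Rabs (C x) /\ x t * C x + Rr x = 0.

Lemma implicit_piece_lipschitz N t C Rr m LC BC LR BR :
  0 <= m -> indep_of t C -> indep_of t Rr ->
  lipschitz_on_cube N m LC BC C -> lipschitz_on_cube N m LR BR Rr ->
  forall x y h, implicit_piece N t C Rr m x -> implicit_piece N t C Rr m y -> 0 <= h ->
    (forall i, (i < N)%nat -> i <> t -> Rabs (x i - y i) <= h) ->
    Rabs (x t - y t) <= (m + 1) ^ 2 * (BR * LC + BC * LR) * h.
Proof.
  intros Hm HiC HiR HC HR x y h (Hx & HCx & Ex) (Hy & HCy & Ey) Hh Hxy.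
  assert (Hcube : forall i, (i < N)%nat ->
    Rabs (upd y t 0 i) <= m /\ Rabs (upd x t 0 i) <= m /\ Rabs (upd y t 0 i - upd x t 0 i) <= h).
  { intros i Hi. unfold upd. destruct (Nat.eqb_spec i t).
    - rewrite Rminus_0_r, Rabs_R0. lra.
    - rewrite Rabs_minus_sym. auto. }
  destruct (HC _ _ h Hh Hcube) as [Cy dC], (HR _ _ h Hh Hcube) as [Ry dR].
  rewrite (HiC y) in Cy. rewrite (HiC x), (HiC y) in dC.
  rewrite (HiR y) in Ry. rewrite (HiR x), (HiR y) in dR.
  (* Eliminating [x t] and [y t] from the two equations of the graph: *)
  assert (Hid : (x t - y t) * C x * C y = Rr y * (C x - C y) + C y * (Rr y - Rr x)).
  { replace (Rr x) with (- (x t * C x)) by lra. replace (Rr y) with (- (y t * C y)) by lra. ring. }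
  assert (Hnum : Rabs (x t - y t) * Rabs (C x) * Rabs (C y) <= (BR * LC + BC * LR) * h).
  { rewrite <- !Rabs_mult, Hid. eapply Rle_trans; [apply Rabs_triang|]. rewrite !Rabs_mult.
    rewrite Rmult_plus_distr_r, !Rmult_assoc.
    apply Rplus_le_compat; apply Rmult_le_compat; auto using Rabs_pos.
    now rewrite Rabs_minus_sym. }
  assert (Hinv : 0 < / (m + 1)) by (apply Rinv_0_lt_compat; lra).
  assert (Hlow : Rabs (x t - y t) * / (m + 1) * / (m + 1) <= (BR * LC + BC * LR) * h).
  { eapply Rle_trans; [|exact Hnum]. pose proof (Rabs_pos (x t - y t)).
    apply Rmult_le_compat; [apply Rmult_le_pos| |apply Rmult_le_compat_l|]; auto; lra. }
  replace (Rabs (x t - y t))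
    with (Rabs (x t - y t) * / (m + 1) * / (m + 1) * (m + 1) ^ 2) by (field; lra).
  apply Rle_trans with ((BR * LC + BC * LR) * h * (m + 1) ^ 2); [|right; ring].
  apply Rmult_le_compat_r; [apply pow_le; lra|exact Hlow].
Qed.

Lemma bounded_coords N (x : nat -> R) : exists m : nat, forall i, (i < N)%nat -> Rabs (x i) <= INR m.
Proof.
  induction N as [|N [m Hm]]; [exists O; lia|].
  destruct (INR_unbounded (Rabs (x N))) as [m' Hm'].
  exists (Nat.max m m'). intros i Hi.
  assert (INR m <= INR (Nat.max m m') /\ INR m' <= INR (Nat.max m m')) as [] by (split; apply le_INR; lia).
  destruct (Nat.eq_dec i N) as [->|]; [lra|]. apply Rle_trans with (INR m); auto. apply Hm; lia.
Qed.

(* On [C <> 0] the zero set is the graph of [- Rr / C] over the other coordinates, a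
   countable union of Lipschitz graphs. *)
Lemma affine_zero_set_null N t C Rr :
  (t < N)%nat -> locally_lipschitz N C -> locally_lipschitz N Rr ->
  indep_of t C -> indep_of t Rr ->
  null_set N (fun x => C x <> 0 /\ x t * C x + Rr x = 0).
Proof.
  intros Ht HC HR HiC HiR.
  apply null_set_subset with (fun x => exists m, implicit_piece N t C Rr (INR m) x).
  - intros x [HCx Ex].
    destruct (bounded_coords N x) as [m1 Hm1].
    destruct (INR_unbounded (/ Rabs (C x))) as [m2 Hm2].
    assert (HCpos : 0 < Rabs (C x)) by (apply Rabs_pos_lt; auto).
    assert (INR m1 <= INR (Nat.max m1 m2) /\ INR m2 <= INR (Nat.max m1 m2)) as []
      by (split; apply le_INR; lia).
    exists (Nat.max m1 m2). split; [|split; auto].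
    + intros i Hi _. apply Rle_trans with (INR m1); auto.
    + rewrite <- (Rinv_inv (Rabs (C x))). apply Rinv_le_contravar; [apply Rinv_0_lt_compat; lra|lra].
  - apply null_set_countable_union. intros k.
    pose proof (pos_INR k) as Hk.
    destruct (HC _ Hk) as (LC & BC & HLC & HBC & HC'), (HR _ Hk) as (LR & BR & HLR & HBR & HR').
    apply (lipschitz_graph_null N t (INR k) ((INR k + 1) ^ 2 * (BR * LC + BC * LR))); auto.
    + apply Rmult_le_pos; [apply pow_le; lra|].
      apply Rplus_le_le_0_compat; apply Rmult_le_pos; auto.
    + intros x Hx. apply Hx.
    + intros x y h Hx Hy Hh. now apply (implicit_piece_lipschitz N t C Rr).
Qed.

(** * Determinants and column spaces *)

Module Mx.
Import all_boot all_algebra perm Rstruct.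
Import GRing.Theory.

Lemma sumR_big k f : sumR k f = (\sum_(i < k) f i)%R.
Proof. elim: k => [|k IH]; first by rewrite big_ord0. by rewrite big_ord_recr /= -IH. Qed.

Definition mx_of p q (F : mat) : 'M[R]_(p, q) := \matrix_(i < p, j < q) F i j.

(* Entries outside the [p x q] range read as [0]. *)
Definition mxget {p q} (A : 'M[R]_(p, q)) (i j : nat) : R :=
  match (insub i : option 'I_p), (insub j : option 'I_q) with
  | Some i', Some j' => A i' j'
  | _, _ => 0
  end.

Lemma mxget_ord p q (A : 'M[R]_(p, q)) (i : 'I_p) (j : 'I_q) : mxget A i j = A i j.
Proof. by rewrite /mxget !valK. Qed.
Arguments mxget_ord {p q}.

Lemma mxget_mx_of p q F i j :
  (i < p)%coq_nat -> (j < q)%coq_nat -> mxget (mx_of p q F) i j = F i j.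
Proof.
  move=> /ltP Hi /ltP Hj. rewrite /mxget.
  case: insubP => [i' _ Ei|]; last by rewrite Hi.
  case: insubP => [j' _ Ej|]; last by rewrite Hj.
  by rewrite mxE Ei Ej.
Qed.

Definition detR k (F : mat) : R := (\det (mx_of k k F))%R.

Lemma detR0 F : detR 0 F = 1.
Proof. by rewrite /detR det_mx00. Qed.

Lemma detR_ext k F G : (forall a b, (a < k)%coq_nat -> (b < k)%coq_nat -> F a b = G a b) ->
  detR k F = detR k G.
Proof.
  move=> E. rewrite /detR. congr (\det _)%R. apply/matrixP => a b. rewrite !mxE.
  by apply: E; apply/ltP.
Qed.

Lemma detR_expand00 k F :
  detR k.+1 F = F O O * detR k (fun a b => F a.+1 b.+1) +
                detR k.+1 (fun a b => if (Nat.eqb a 0 && Nat.eqb b 0)%bool then 0 else F a b).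
Proof.
  rewrite RplusE RmultE /detR !(expand_det_row _ ord0) !big_ord_recl.
  set A := mx_of k.+1 k.+1 F.
  set A' := mx_of k.+1 k.+1 (fun a b => if (Nat.eqb a 0 && Nat.eqb b 0)%bool then 0 else F a b).
  have Hcof j : cofactor A ord0 j = cofactor A' ord0 j.
    by rewrite /cofactor; congr (_ * \det _)%R; apply/matrixP => a b; rewrite !mxE.
  rewrite [A' ord0 ord0]mxE mul0r add0r. congr (_ + _)%R.
  - rewrite /cofactor addn0 expr0 mul1r {1}/A mxE. congr (_ * \det _)%R.
    by apply/matrixP => a b; rewrite !mxE !lift0.
  - by apply: eq_bigr => j _; rewrite Hcof !mxE lift0.
Qed.

Lemma locally_lipschitz_sum N (I : Type) (r : seq I) (P : pred I) (F : I -> (nat -> R) -> R) :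
  (forall i, P i -> locally_lipschitz N (F i)) ->
  locally_lipschitz N (fun x => \sum_(i <- r | P i) F i x)%R.
Proof.
  move=> HF. elim: r => [|i r IH].
    apply: (locally_lipschitz_ext _ (fun _ => 0)); last exact: locally_lipschitz_const.
    by move=> x; rewrite big_nil.
  case HPi: (P i).
  - apply: (locally_lipschitz_ext _ (fun x => F i x + \sum_(j <- r | P j) F j x)%R).
      by move=> x; rewrite big_cons HPi.
    exact: locally_lipschitz_add (HF i HPi) IH.
  - by apply: (locally_lipschitz_ext _ _ _ _ IH) => x; rewrite big_cons HPi.
Qed.

Lemma locally_lipschitz_prod N (I : Type) (r : seq I) (P : pred I) (F : I -> (nat -> R) -> R) :
  (forall i, P i -> locally_lipschitz N (F i)) ->
  locally_lipschitz N (fun x => \prod_(i <- r | P i) F i x)%R.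
Proof.
  move=> HF. elim: r => [|i r IH].
    apply: (locally_lipschitz_ext _ (fun _ => 1)); last exact: locally_lipschitz_const.
    by move=> x; rewrite big_nil.
  case HPi: (P i).
  - apply: (locally_lipschitz_ext _ (fun x => F i x * \prod_(j <- r | P j) F j x)%R).
      by move=> x; rewrite big_cons HPi.
    exact: locally_lipschitz_mul (HF i HPi) IH.
  - by apply: (locally_lipschitz_ext _ _ _ _ IH) => x; rewrite big_cons HPi.
Qed.

Lemma locally_lipschitz_det N k (e : nat -> nat -> (nat -> R) -> R) :
  (forall a b, (a < k)%coq_nat -> (b < k)%coq_nat -> locally_lipschitz N (e a b)) ->
  locally_lipschitz N (fun x => detR k (fun a b => e a b x)).
Proof.
  move=> He. rewrite /detR /determinant.
  apply: locally_lipschitz_sum => s _.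
  apply: locally_lipschitz_mul; first exact: locally_lipschitz_const.
  have HP : locally_lipschitz N (fun x => \prod_(i < k) e i ((s : 'S_k) i) x)%R.
    by apply: locally_lipschitz_prod => i _; apply: He; apply/ltP.
  by apply: (locally_lipschitz_ext _ _ _ _ HP) => x; apply: eq_bigr => i _; rewrite mxE.
Qed.

(* MathComp reasons about row spaces, so the columns of [B] become rows. *)
Definition colmx n k (B : mat) : 'M[R]_(k, n) := mx_of k n (fun j i => B i j).
Definition rowvec n (v : vec) : 'M[R]_(1, n) := mx_of 1 n (fun _ i => v i).

Lemma in_colspaceE n k B v : in_colspace n k B v <-> (rowvec n v <= colmx n k B)%MS.
Proof.
  split.
  - move=> [c Hc]. apply/submxP. exists (mx_of 1 k (fun _ j => c j)).
    apply/matrixP => a i. rewrite !mxE (Hc i (ltP (ltn_ord i))) sumR_big.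
    by apply: eq_bigr => j _; rewrite !mxE.
  - move/submxP => [D HD]. exists (fun j => mxget D 0 j) => i /ltP Hi.
    have := congr1 (fun M : 'M_(1, n) => M ord0 (Ordinal Hi)) HD. rewrite !mxE /= => ->.
    by rewrite sumR_big; apply: eq_bigr => j _; rewrite !mxE (mxget_ord D ord0 j).
Qed.

Lemma lin_indepE n k B : lin_indep n k B <-> row_free (colmx n k B).
Proof.
  split.
  - move=> H. apply/negPn/negP => Hnf.
    have : kermx (colmx n k B) != 0%R by rewrite kermx_eq0.
    move/rowV0Pn => [v Hv Hv0]. move: Hv. rewrite sub_kermx => /eqP Hv.
    have Hc j : (j < k)%coq_nat -> mxget v 0 j = 0.
    { apply: H => i /ltP Hi.
      have := congr1 (fun M : 'M_(1, n) => M ord0 (Ordinal Hi)) Hv. rewrite !mxE /= => E.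
      rewrite sumR_big -[X in _ = X]E. by apply: eq_bigr => j' _; rewrite !mxE (mxget_ord v ord0 j'). }
    move/eqP: Hv0; apply. apply/matrixP => a j. rewrite (ord1 a) mxE -(mxget_ord v ord0 j).
    by apply: Hc; apply/ltP.
  - move=> Hf c Hc j /ltP Hj.
    have HD : (mx_of 1 k (fun _ j => c j) *m colmx n k B = 0 *m colmx n k B)%R.
    { rewrite mul0mx. apply/matrixP => a i. rewrite !mxE.
      apply: (eq_trans _ (Hc i (ltP (ltn_ord i)))).
      by rewrite sumR_big; apply: eq_bigr => l _; rewrite !mxE. }
    have := congr1 (fun M : 'M_(1, k) => M ord0 (Ordinal Hj)) (row_free_inj Hf HD).
    by rewrite !mxE.
Qed.

Lemma cols_in_colspaceE n k m B A :
  (forall j, (j < k)%coq_nat -> in_colspace n m A (fun i => B i j)) <-> (colmx n k B <= colmx n m A)%MS.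
Proof.
  have row_colmx (j : 'I_k) : row j (colmx n k B) = rowvec n (fun i => B i j).
    by apply/matrixP => a i; rewrite !mxE.
  split.
  - move=> H. apply/row_subP => j. rewrite row_colmx. apply/in_colspaceE. by apply: H; apply/ltP.
  - move=> H j /ltP Hj. apply/in_colspaceE.
    rewrite -(row_colmx (Ordinal Hj)). by move/row_subP: H; apply.
Qed.

Lemma col_in_colspace n m A j : (j < m)%coq_nat -> in_colspace n m A (fun i => A i j).
Proof. move=> Hj. exists (fun l => kdelta j l) => i Hi. by rewrite sumR_kdelta. Qed.

Lemma rank_eq_mxrank n m A k : rank_eq n m A k -> \rank (colmx n m A) = k.
Proof.
  move=> [B [Hcol [Hind Hspan]]].
  have S1 : (colmx n k B <= colmx n m A)%MS by apply/cols_in_colspaceE.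
  have S2 : (colmx n m A <= colmx n k B)%MS.
    by apply/cols_in_colspaceE => j Hj; apply: Hspan; apply: col_in_colspace.
  move/lin_indepE: Hind => /eqP <-. apply/eqP. by rewrite eqn_leq !mxrankS.
Qed.

Lemma in_colspace_trans n k Y m X v : in_colspace n k Y v ->
  (forall l, (l < k)%coq_nat -> in_colspace n m X (fun i => Y i l)) -> in_colspace n m X v.
Proof. move=> /in_colspaceE H1 /cols_in_colspaceE H2. apply/in_colspaceE. exact: submx_trans H1 H2. Qed.

Lemma colbasis_of_lin_indep n k B m A : lin_indep n k B ->
  (forall j, (j < k)%coq_nat -> in_colspace n m A (fun i => B i j)) ->
  rank_eq n m A k -> is_colbasis n k B m A.
Proof.
  move=> Hind Hcol /rank_eq_mxrank Hrk. split; [exact: Hcol|split; [exact: Hind|]].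
  move=> v /in_colspaceE Hv. apply/in_colspaceE.
  have S1 : (colmx n k B <= colmx n m A)%MS by apply/cols_in_colspaceE.
  move/lin_indepE: Hind => /eqP Hfree.
  have S2 : (colmx n m A <= colmx n k B)%MS by rewrite -(mxrank_leqif_sup S1).2 Hfree Hrk.
  exact: submx_trans Hv S2.
Qed.

Lemma lin_indep_of_spanning n k B m A :
  (forall j, (j < k)%coq_nat -> in_colspace n m A (fun i => B i j)) ->
  (forall j, (j < m)%coq_nat -> in_colspace n k B (fun i => A i j)) ->
  rank_eq n m A k -> lin_indep n k B.
Proof.
  move=> /cols_in_colspaceE S1 /cols_in_colspaceE S2 /rank_eq_mxrank Hrk.
  apply/lin_indepE/eqP. apply: (etrans _ Hrk). by apply/eqP; rewrite eqn_leq !mxrankS.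
Qed.

Lemma factor_colbasis n m k X Y G :
  (forall i j, (i < n)%coq_nat -> (j < m)%coq_nat -> X i j = sumR k (fun l => Y i l * G l j)) ->
  rank_eq n m X k ->
  lin_indep n k Y /\ (forall l, (l < k)%coq_nat -> in_colspace n m X (fun i => Y i l)).
Proof.
  move=> HX /rank_eq_mxrank Hrk.
  have E : colmx n m X = (mx_of m k (fun j l => G l j) *m colmx n k Y)%R.
  { apply/matrixP => j i. rewrite !mxE (HX i j (ltP (ltn_ord i)) (ltP (ltn_ord j))) sumR_big.
    by apply: eq_bigr => l _; rewrite !mxE mulrC. }
  have S1 : (colmx n m X <= colmx n k Y)%MS by rewrite E submxMl.
  have Rk : \rank (colmx n k Y) = k.
    by apply/eqP; rewrite eqn_leq rank_leq_row /= -{1}Hrk mxrankS.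
  split.
  - by apply/lin_indepE; rewrite /row_free Rk.
  - by apply/cols_in_colspaceE; rewrite -(mxrank_leqif_sup S1).2 Rk Hrk.
Qed.

Definition invR k (F : mat) : mat := mxget (invmx (mx_of k k F)).

Lemma invR_mul k F : detR k F <> 0 -> forall i j, (i < k)%coq_nat -> (j < k)%coq_nat ->
  sumR k (fun l => F i l * invR k F l j) = kdelta i j /\
  sumR k (fun l => invR k F i l * F l j) = kdelta i j.
Proof.
  move=> Hd i j /ltP Hi /ltP Hj.
  have U : mx_of k k F \in unitmx by rewrite unitmxE unitfE; apply/eqP.
  have Hk (A B : 'M[R]_k) : (A *m B = 1%:M)%R ->
      sumR k (fun l => mxget A i l * mxget B l j) = kdelta i j.
  { move=> E. have := congr1 (fun M : 'M_k => M (Ordinal Hi) (Ordinal Hj)) E.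
    rewrite !mxE /= => E1. rewrite sumR_big.
    have -> : (\sum_(l < k) mxget A i l * mxget B l j =
               \sum_(l < k) A (Ordinal Hi) l * B l (Ordinal Hj))%R.
      by apply: eq_bigr => l _; rewrite -(mxget_ord A (Ordinal Hi) l) -(mxget_ord B l (Ordinal Hj)).
    rewrite E1 /kdelta; case: (Nat.eqb_spec i j) => [Eij|Hne].
    - by rewrite (_ : Ordinal Hi = Ordinal Hj) ?eqxx //; apply: val_inj.
    - by case: eqP => // [[]]. }
  split.
  - rewrite -(Hk _ _ (mulmxV U)). apply: sumR_ext => l /ltP Hl. by rewrite mxget_mx_of //; apply/ltP.
  - rewrite -(Hk _ _ (mulVmx U)). apply: sumR_ext => l /ltP Hl. by rewrite mxget_mx_of //; apply/ltP.
Qed.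

End Mx.

(* Expanding along the entry [x t] at position [(0, 0)] writes the determinant as
   [x t * C x + R x] with [C] the complementary minor, which is again such a
   determinant, and [R] independent of [x t]. *)
Lemma det_of_coords_zero_null N k (idx : nat -> nat -> nat) :
  (1 <= N)%nat ->
  (forall a b, (a < k)%nat -> (b < k)%nat -> (idx a b < N)%nat) ->
  (forall a b a' b', (a < k)%nat -> (b < k)%nat -> (a' < k)%nat -> (b' < k)%nat ->
     idx a b = idx a' b' -> a = a' /\ b = b') ->
  null_set N (fun x => Mx.detR k (fun a b => x (idx a b)) = 0).
Proof.
  intros HN. revert idx. induction k as [|k IH]; intros idx Hlt Hinj.
  { apply null_set_empty; auto. intros x. rewrite Mx.detR0. lra. }
  set (t := idx O O).
  set (C x := Mx.detR k (fun a b => x (idx (S a) (S b)))).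
  set (Rr x := Mx.detR (S k)
                 (fun a b => if (Nat.eqb a 0 && Nat.eqb b 0)%bool then 0 else x (idx a b))).
  assert (Hneq : forall a b, (a < S k)%nat -> (b < S k)%nat -> (a, b) <> (O, O) -> idx a b <> t).
  { intros a b Ha Hb Hab E. apply Hab. destruct (Hinj a b O O) as [-> ->]; auto; lia. }
  apply null_set_subset with (fun x => C x = 0 \/ (C x <> 0 /\ x t * C x + Rr x = 0)).
  { intros x Hx. destruct (Req_dec (C x) 0) as [|HC]; [now left|right].
    split; auto. rewrite <- Hx. symmetry. apply Mx.detR_expand00. }
  apply null_set_union.
  - apply IH; [intros; apply Hlt; lia|].
    intros a b a' b' Ha Hb Ha' Hb' E.
    destruct (Hinj (S a) (S b) (S a') (S b')); auto; lia.
  - apply affine_zero_set_null.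
    + apply Hlt; lia.
    + apply Mx.locally_lipschitz_det. intros a b Ha Hb. apply locally_lipschitz_coord, Hlt; lia.
    + apply Mx.locally_lipschitz_det. intros a b Ha Hb.
      destruct (Nat.eqb a 0 && Nat.eqb b 0)%bool;
        [apply locally_lipschitz_const|apply locally_lipschitz_coord, Hlt; lia].
    + intros x u. apply Mx.detR_ext. intros a b Ha Hb.
      rewrite upd_neq; auto. apply Hneq; [lia|lia|congruence].
    + intros x u. apply Mx.detR_ext. intros a b Ha Hb.
      destruct (Nat.eqb_spec a 0), (Nat.eqb_spec b 0); simpl; auto;
        rewrite upd_neq; auto; apply Hneq; auto; congruence.
Qed.

Lemma sumR_pad_right k e g f :
  sumR (k + e) (fun l => (if Nat.ltb l k then g l else 0) * f l) = sumR k (fun l => g l * f l).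
Proof.
  rewrite sumR_split, (sumR_eq0 e) by (intros l Hl; rewrite ltb_false by lia; ring).
  rewrite Rplus_0_r. apply sumR_ext. intros l Hl. now rewrite ltb_true.
Qed.

Lemma sumR_pad_left a k g f :
  sumR (a + k) (fun l => (if Nat.ltb l a then 0 else g (l - a)%nat) * f l) =
  sumR k (fun l => g l * f (a + l)%nat).
Proof.
  rewrite sumR_split, (sumR_eq0 a) by (intros l Hl; rewrite ltb_true by lia; ring).
  rewrite Rplus_0_l. apply sumR_ext. intros l Hl.
  now rewrite ltb_false, add_sub_l by lia.
Qed.

Lemma in_colspace_ext n k Y v v' :
  (forall i, (i < n)%nat -> v i = v' i) -> in_colspace n k Y v -> in_colspace n k Y v'.
Proof. intros E [c Hc]. exists c. intros i Hi. rewrite <- E by auto. auto. Qed.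

Lemma in_colspace_widen n a k Y v : (a <= k)%nat -> in_colspace n a Y v -> in_colspace n k Y v.
Proof.
  intros Hk [c Hc]. exists (fun l => if Nat.ltb l a then c l else 0). intros i Hi.
  replace k with (a + (k - a))%nat by lia.
  rewrite Hc by auto. symmetry. apply (sumR_pad_right a (k - a) c (Y i)).
Qed.

Lemma in_colspace_shift n a b k Y v : (a + b = k)%nat ->
  in_colspace n b (fun i l => Y i (a + l)%nat) v -> in_colspace n k Y v.
Proof.
  intros <- [c Hc]. exists (fun l => if Nat.ltb l a then 0 else c (l - a)%nat). intros i Hi.
  rewrite Hc by auto. symmetry. apply (sumR_pad_left a b c (Y i)).
Qed.

Lemma in_colspace_meet n a b c Y v : lin_indep n (a + b + c) Y ->
  in_colspace n (a + b) Y v -> in_colspace n (b + c) (fun i l => Y i (a + l)%nat) v ->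
  in_colspace n b (fun i l => Y i (a + l)%nat) v.
Proof.
  intros Hind [c1 H1] [c2 H2].
  assert (Hd : forall l, (l < a + b + c)%nat ->
    (if Nat.ltb l (a + b) then c1 l else 0) - (if Nat.ltb l a then 0 else c2 (l - a)%nat) = 0).
  { apply Hind. intros i Hi.
    rewrite (sumR_ext _ _ (fun l => (if Nat.ltb l (a + b) then c1 l else 0) * Y i l -
                                    (if Nat.ltb l a then 0 else c2 (l - a)%nat) * Y i l))
      by (intros; ring).
    rewrite sumR_sub, sumR_pad_right, <- Nat.add_assoc, sumR_pad_left, <- H1, <- H2 by auto.
    ring. }
  exists (fun l => c1 (a + l)%nat). intros i Hi.
  rewrite H1 by auto. rewrite sumR_split, (sumR_eq0 a); [ring|].
  intros l Hl. specialize (Hd l ltac:(lia)).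
  rewrite ltb_true, ltb_true, Rminus_0_r in Hd by lia. rewrite Hd. ring.
Qed.

Definition pivot_minor (Y : mat) (piv : nat -> nat) : mat := fun a b => Y (piv a) b.

Definition normalize k (Y : mat) (piv : nat -> nat) : mat :=
  fun i j => sumR k (fun l => Y i l * Mx.invR k (pivot_minor Y piv) l j).

Lemma normalize_pivot k Y piv a j : Mx.detR k (pivot_minor Y piv) <> 0 ->
  (a < k)%nat -> (j < k)%nat -> normalize k Y piv (piv a) j = kdelta a j.
Proof. intros Hd Ha Hj. exact (proj1 (Mx.invR_mul k _ Hd a j Ha Hj)). Qed.

Lemma normalize_in_colspace n k Y piv j : in_colspace n k Y (fun i => normalize k Y piv i j).
Proof.
  exists (fun l => Mx.invR k (pivot_minor Y piv) l j). intros i _.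
  apply sumR_ext. intros; ring.
Qed.

Lemma normalize_unique n k Y piv j v : Mx.detR k (pivot_minor Y piv) <> 0 ->
  (forall a, (a < k)%nat -> (piv a < n)%nat) -> (j < k)%nat -> in_colspace n k Y v ->
  (forall a, (a < k)%nat -> v (piv a) = kdelta a j) ->
  forall i, (i < n)%nat -> v i = normalize k Y piv i j.
Proof.
  intros Hd Hpiv Hj [c Hc] Hv.
  set (F := pivot_minor Y piv).
  assert (Hcoef : forall l, (l < k)%nat -> c l = Mx.invR k F l j).
  { intros l Hl. transitivity (sumR k (fun a => Mx.invR k F l a * sumR k (fun m => c m * F a m))).
    - rewrite (sumR_ext _ _ (fun a => sumR k (fun m => c m * (Mx.invR k F l a * F a m))))
        by (intros a _; rewrite <- sumR_mull; apply sumR_ext; intros; ring).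
      rewrite sumR_swap, (sumR_ext _ _ (fun m => c m * kdelta l m)).
      + now rewrite sumR_kdelta_r.
      + intros m Hm. rewrite sumR_mull. now rewrite (proj2 (Mx.invR_mul k F Hd l m Hl Hm)).
    - rewrite (sumR_ext _ _ (fun a => kdelta j a * Mx.invR k F l a)).
      + now rewrite sumR_kdelta.
      + intros a Ha. unfold F, pivot_minor. rewrite <- Hc, Hv, kdelta_sym by auto. ring. }
  intros i Hi. rewrite Hc by auto. unfold normalize. fold F. apply sumR_ext.
  intros l Hl. rewrite Hcoef by auto. ring.
Qed.

(** * The canonical structured basis *)

Lemma lin_indep_block_upper n a b (B : mat) (rho1 rho2 : nat -> nat) :
  (forall i, (i < a)%nat -> (rho1 i < n)%nat) -> (forall i, (i < b)%nat -> (rho2 i < n)%nat) ->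
  (forall i j, (i < a)%nat -> (j < a)%nat -> B (rho1 i) j = kdelta i j) ->
  (forall i j, (i < b)%nat -> (j < a)%nat -> B (rho2 i) j = 0) ->
  (forall i j, (i < b)%nat -> (j < b)%nat -> B (rho2 i) (a + j)%nat = kdelta i j) ->
  lin_indep n (a + b) B.
Proof.
  intros Hr1 Hr2 H11 H21 H22 c Hc.
  assert (Hlast : forall j, (j < b)%nat -> c (a + j)%nat = 0).
  { intros j Hj. rewrite <- (Hc (rho2 j) (Hr2 j Hj)), sumR_split, (sumR_eq0 a), Rplus_0_l.
    - transitivity (sumR b (fun l => c (a + l)%nat * kdelta j l)); [now rewrite sumR_kdelta_r|].
      apply sumR_ext. intros l Hl. now rewrite H22.
    - intros l Hl. rewrite H21 by auto. ring. }
  intros j Hj. destruct (Nat.lt_ge_cases j a) as [Hja|Hja].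
  - rewrite <- (Hc (rho1 j) (Hr1 j Hja)), sumR_split, (sumR_eq0 b), Rplus_0_r.
    + transitivity (sumR a (fun l => c l * kdelta j l)); [now rewrite sumR_kdelta_r|].
      apply sumR_ext. intros l Hl. now rewrite H11.
    + intros l Hl. rewrite Hlast by auto. ring.
  - replace j with (a + (j - a))%nat by lia. apply Hlast. lia.
Qed.

Lemma lin_indep_block_lower n a b (B : mat) (rho1 rho2 : nat -> nat) :
  (forall i, (i < a)%nat -> (rho1 i < n)%nat) -> (forall i, (i < b)%nat -> (rho2 i < n)%nat) ->
  (forall i j, (i < a)%nat -> (j < a)%nat -> B (rho1 i) j = kdelta i j) ->
  (forall i j, (i < a)%nat -> (j < b)%nat -> B (rho1 i) (a + j)%nat = 0) ->
  (forall i j, (i < b)%nat -> (j < b)%nat -> B (rho2 i) (a + j)%nat = kdelta i j) ->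
  lin_indep n (a + b) B.
Proof.
  intros Hr1 Hr2 H11 H12 H22 c Hc.
  assert (Hfirst : forall j, (j < a)%nat -> c j = 0).
  { intros j Hj. rewrite <- (Hc (rho1 j) (Hr1 j Hj)), sumR_split, (sumR_eq0 b), Rplus_0_r.
    - transitivity (sumR a (fun l => c l * kdelta j l)); [now rewrite sumR_kdelta_r|].
      apply sumR_ext. intros l Hl. now rewrite H11.
    - intros l Hl. rewrite H12 by auto. ring. }
  intros j Hj. destruct (Nat.lt_ge_cases j a) as [Hja|Hja]; [now apply Hfirst|].
  replace j with (a + (j - a))%nat by lia.
  rewrite <- (Hc (rho2 (j - a)%nat) (Hr2 (j - a)%nat ltac:(lia))).
  rewrite sumR_split, (sumR_eq0 a), Rplus_0_l.
  - transitivity (sumR b (fun l => c (a + l)%nat * kdelta (j - a) l));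
      [now rewrite sumR_kdelta_r by lia|].
    apply sumR_ext. intros l Hl. rewrite H22 by lia. reflexivity.
  - intros l Hl. rewrite Hfirst by auto. ring.
Qed.

Section CanonicalBasis.
Variables (n m1 m2 r r1 r2 : nat).
Hypotheses (Hr1 : (r1 <= r)%nat) (Hr2 : (r2 <= r)%nat) (Hrn : (r <= n)%nat) (Hr : (r <= r1 + r2)%nat).

Definition r1' := (r - r2)%nat.
Definition r2' := (r - r1)%nat.
Definition r' := (r1 + r2 - r)%nat.
Definition M := Nat.max r1' r2'.

(* The rows (0-based: [0..r1'-1] and [R]) on which the columns of [[V1|V2]] carry the
   identity of the canonical pattern, resp. [0..r2'-1] and [R] for [[V2|V3]]. *)
Definition pivot1 a := if Nat.ltb a r1' then a else (M + (a - r1'))%nat.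
Definition pivot2 a := if Nat.ltb a r2' then a else (M + (a - r2'))%nat.

Lemma dims : r1 = (r1' + r')%nat /\ r2 = (r' + r2')%nat /\ r = (r1' + r' + r2')%nat /\
  (M + r' <= n)%nat /\ (r1' <= M)%nat /\ (r2' <= M)%nat.
Proof.
  unfold M, r1', r2', r'. destruct (Nat.max_spec (r - r2) (r - r1)) as [[? ->]|[? ->]]; lia.
Qed.

Lemma pivot1_lo a : (a < r1')%nat -> pivot1 a = a.
Proof. intros. unfold pivot1. now rewrite ltb_true. Qed.
Lemma pivot1_hi a : (r1' <= a)%nat -> pivot1 a = (M + (a - r1'))%nat.
Proof. intros. unfold pivot1. now rewrite ltb_false. Qed.
Lemma pivot2_lo a : (a < r2')%nat -> pivot2 a = a.
Proof. intros. unfold pivot2. now rewrite ltb_true. Qed.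
Lemma pivot2_hi a : (r2' <= a)%nat -> pivot2 a = (M + (a - r2'))%nat.
Proof. intros. unfold pivot2. now rewrite ltb_false. Qed.

Lemma pivot1_lt a : (a < r1)%nat -> (pivot1 a < n)%nat.
Proof.
  pose proof dims as (? & ? & ? & ? & ? & ?). unfold pivot1; destruct (Nat.ltb_spec a r1'); lia.
Qed.
Lemma pivot2_lt a : (a < r2)%nat -> (pivot2 a < n)%nat.
Proof.
  pose proof dims as (? & ? & ? & ? & ? & ?). unfold pivot2; destruct (Nat.ltb_spec a r2'); lia.
Qed.

Lemma pivot1_inj a a' : (a < r1)%nat -> (a' < r1)%nat -> pivot1 a = pivot1 a' -> a = a'.
Proof.
  pose proof dims as (? & ? & ? & ? & ? & ?).
  unfold pivot1; destruct (Nat.ltb_spec a r1'), (Nat.ltb_spec a' r1'); lia.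
Qed.
Lemma pivot2_inj a a' : (a < r2)%nat -> (a' < r2)%nat -> pivot2 a = pivot2 a' -> a = a'.
Proof.
  pose proof dims as (? & ? & ? & ? & ? & ?).
  unfold pivot2; destruct (Nat.ltb_spec a r2'), (Nat.ltb_spec a' r2'); lia.
Qed.

Definition pivot_pattern (V : mat) : Prop :=
  (forall a j, (a < r1)%nat -> (j < r1')%nat -> V (pivot1 a) j = kdelta a j) /\
  (forall a b, (a < r')%nat -> (b < r')%nat -> V (M + a)%nat (r1' + b)%nat = kdelta a b) /\
  (forall a j, (a < r2)%nat -> (j < r2')%nat -> V (pivot2 a) (r1 + j)%nat = kdelta a j).

Lemma canonical_patternE V : canonical_pattern r1 r2 r V <-> pivot_pattern V.
Proof.
  destruct dims as (E1 & E2 & E3 & E4 & E5 & E6).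
  unfold canonical_pattern, pivot_pattern. fold r1' r2' r'. fold M. split.
  - intros (C1 & C2 & C3 & C4 & C5). split; [|split; auto].
    + intros a j Ha Hj. destruct (Nat.lt_ge_cases a r1').
      * rewrite pivot1_lo by auto. auto.
      * rewrite pivot1_hi, C4, kdelta_neq by lia. reflexivity.
    + intros a j Ha Hj. destruct (Nat.lt_ge_cases a r2').
      * rewrite pivot2_lo by auto. auto.
      * rewrite pivot2_hi, C5, kdelta_neq by lia. reflexivity.
  - intros (P1 & P2 & P3). split; [|split; [|split; [auto|split]]].
    + intros i j Hi Hj. rewrite <- (pivot1_lo i) at 1 by auto. apply P1; lia.
    + intros i j Hi Hj. rewrite <- (pivot2_lo i) at 1 by auto. apply P3; lia.
    + intros a j Ha Hj. replace (M + a)%nat with (pivot1 (r1' + a)) by (rewrite pivot1_hi; lia).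
      rewrite P1, kdelta_neq by lia. reflexivity.
    + intros a j Ha Hj. replace (M + a)%nat with (pivot2 (r2' + a)) by (rewrite pivot2_hi; lia).
      rewrite P3, kdelta_neq by lia. reflexivity.
Qed.

Lemma pivot_pattern_lin_indep1 V : pivot_pattern V -> lin_indep n r1 V.
Proof.
  destruct dims as (E1 & E2 & E3 & E4 & E5 & E6). intros (P1 & P2 & P3).
  rewrite E1. apply (lin_indep_block_upper n r1' r' V (fun i => i) (fun i => M + i)%nat);
    [intros; lia|intros; lia| | |auto].
  - intros i j Hi Hj. rewrite <- (pivot1_lo i) at 1 by auto. apply P1; lia.
  - intros i j Hi Hj. replace (M + i)%nat with (pivot1 (r1' + i)) by (rewrite pivot1_hi; lia).
    rewrite P1, kdelta_neq by lia. reflexivity.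
Qed.

Lemma pivot_pattern_lin_indep2 V : pivot_pattern V -> lin_indep n r2 (fun i j => V i (r1' + j)%nat).
Proof.
  destruct dims as (E1 & E2 & E3 & E4 & E5 & E6). intros (P1 & P2 & P3).
  rewrite E2. apply (lin_indep_block_lower n r' r2' _ (fun i => M + i)%nat (fun i => i));
    [intros; lia|intros; lia|auto| |].
  - intros i j Hi Hj. replace (M + i)%nat with (pivot2 (r2' + i)) by (rewrite pivot2_hi; lia).
    replace (r1' + (r' + j))%nat with (r1 + j)%nat by lia.
    rewrite P3, kdelta_neq by lia. reflexivity.
  - intros i j Hi Hj. replace (r1' + (r' + j))%nat with (r1 + j)%nat by lia.
    rewrite <- (pivot2_lo i) at 1 by auto. apply P3; lia.
Qed.

Variable x : nat -> R.

Definition W : mat := fun i k => x (i * r + k)%nat.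
Definition W_shift : mat := fun i l => W i (r1' + l)%nat.
Definition G1 : mat := fun a b => x (n * r + a * m1 + b)%nat.
Definition G2 : mat := fun a b => x (n * r + r1 * m1 + a * m2 + b)%nat.

Local Notation U := (param_U n m1 m2 r1 r2 r x).

Lemma view1_factor i j : (j < m1)%nat -> view1 U i j = sumR r1 (fun l => W i l * G1 l j).
Proof. intros Hj. unfold view1, param_U. now rewrite ltb_true. Qed.

Lemma view2_factor i j : (j < m2)%nat -> view2 m1 U i j = sumR r2 (fun l => W_shift i l * G2 l j).
Proof.
  intros Hj. unfold view2, param_U. rewrite ltb_false by lia.
  now replace (m1 + j - m1)%nat with j by lia.
Qed.

Lemma view1_cols_in_U j : (j < m1)%nat -> in_colspace n (m1 + m2) U (fun i => view1 U i j).
Proof. intros Hj. apply (in_colspace_widen _ m1); [lia|]. now apply Mx.col_in_colspace. Qed.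

Lemma view2_cols_in_U j : (j < m2)%nat -> in_colspace n (m1 + m2) U (fun i => view2 m1 U i j).
Proof.
  intros Hj. apply (in_colspace_shift _ m1 m2); [lia|].
  exact (Mx.col_in_colspace n m2 (view2 m1 U) j Hj).
Qed.

Lemma U_cols_in_W j : (j < m1 + m2)%nat -> in_colspace n r W (fun i => U i j).
Proof.
  destruct dims as (E1 & E2 & E3 & E4 & E5 & E6). intros Hj.
  destruct (Nat.lt_ge_cases j m1) as [Hj1|Hj1].
  - apply (in_colspace_widen _ r1); [lia|].
    exists (fun l => G1 l j). intros i Hi. change (U i j) with (view1 U i j).
    rewrite view1_factor by auto. apply sumR_ext. intros; ring.
  - apply (in_colspace_shift _ r1' r2); [lia|].
    exists (fun l => G2 l (j - m1)%nat). intros i Hi.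
    replace (U i j) with (view2 m1 U i (j - m1)%nat)
      by (unfold view2; now replace (m1 + (j - m1))%nat with j by lia).
    rewrite view2_factor by lia. apply sumR_ext. intros; unfold W_shift; ring.
Qed.

Hypotheses (rank1 : rank_eq n m1 (view1 U) r1) (rank2 : rank_eq n m2 (view2 m1 U) r2)
  (rank : rank_eq n (m1 + m2) U r).

Lemma W_cols1 l : (l < r1)%nat -> in_colspace n m1 (view1 U) (fun i => W i l).
Proof. apply (Mx.factor_colbasis n m1 r1 (view1 U) W G1); auto. intros; now apply view1_factor. Qed.

Lemma W_cols2 l : (l < r2)%nat -> in_colspace n m2 (view2 m1 U) (fun i => W_shift i l).
Proof.
  apply (Mx.factor_colbasis n m2 r2 (view2 m1 U) W_shift G2); auto. intros; now apply view2_factor.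
Qed.

Lemma W_cols l : (l < r)%nat -> in_colspace n (m1 + m2) U (fun i => W i l).
Proof.
  destruct dims as (E1 & E2 & E3 & E4 & E5 & E6). intros Hl.
  destruct (Nat.lt_ge_cases l r1).
  - apply (Mx.in_colspace_trans n m1 (view1 U)); [now apply W_cols1|apply view1_cols_in_U].
  - apply (Mx.in_colspace_trans n m2 (view2 m1 U)); [|apply view2_cols_in_U].
    apply (in_colspace_ext _ _ _ (fun i => W_shift i (l - r1')%nat)).
    + intros i _. unfold W_shift. now replace (r1' + (l - r1'))%nat with l by lia.
    + apply W_cols2. lia.
Qed.

Lemma W_lin_indep : lin_indep n r W.
Proof. apply (Mx.lin_indep_of_spanning n r W (m1 + m2) U); auto using W_cols, U_cols_in_W. Qed.

Definition V1 : mat := normalize r1 W pivot1.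
Definition V2 : mat := normalize r' W_shift (fun a => M + a)%nat.
Definition V3 : mat := normalize r2 W_shift pivot2.

Definition Vcan : mat := fun i j =>
  if Nat.ltb j r1' then V1 i j else if Nat.ltb j r1 then V2 i (j - r1')%nat else V3 i (j - r1)%nat.

Hypotheses (minor1 : Mx.detR r1 (pivot_minor W pivot1) <> 0)
  (minor2 : Mx.detR r' (pivot_minor W_shift (fun a => M + a)%nat) <> 0)
  (minor3 : Mx.detR r2 (pivot_minor W_shift pivot2) <> 0).

Lemma Vcan_pattern : pivot_pattern Vcan.
Proof.
  destruct dims as (E1 & E2 & E3 & E4 & E5 & E6). split; [|split].
  - intros a j Ha Hj. unfold Vcan. rewrite ltb_true by auto.
    apply normalize_pivot; auto; lia.
  - intros a b Ha Hb. unfold Vcan. rewrite ltb_false, ltb_true, add_sub_l by lia.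
    now apply normalize_pivot.
  - intros a j Ha Hj. unfold Vcan. rewrite ltb_false, ltb_false, add_sub_l by lia.
    apply normalize_pivot; auto; lia.
Qed.

Lemma Vcan_cols1 j : (j < r1)%nat -> in_colspace n r1 W (fun i => Vcan i j).
Proof.
  destruct dims as (E1 & E2 & E3 & E4 & E5 & E6). intros Hj. unfold Vcan.
  destruct (Nat.lt_ge_cases j r1') as [Hj1|Hj1].
  - rewrite ltb_true by auto. apply normalize_in_colspace.
  - rewrite ltb_false, ltb_true by lia.
    apply (in_colspace_shift _ r1' r'); [lia|]. apply normalize_in_colspace.
Qed.

Lemma Vcan_cols2 j : (j < r2)%nat -> in_colspace n r2 W_shift (fun i => Vcan i (r1' + j)%nat).
Proof.
  destruct dims as (E1 & E2 & E3 & E4 & E5 & E6). intros Hj. unfold Vcan.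
  rewrite ltb_false by lia. destruct (Nat.lt_ge_cases j r') as [Hj1|Hj1].
  - rewrite ltb_true by lia. apply (in_colspace_widen _ r'); [lia|].
    rewrite add_sub_l. apply normalize_in_colspace.
  - rewrite ltb_false by lia. apply normalize_in_colspace.
Qed.

Lemma Vcan_cols j : (j < r)%nat -> in_colspace n r W (fun i => Vcan i j).
Proof.
  destruct dims as (E1 & E2 & E3 & E4 & E5 & E6). intros Hj.
  destruct (Nat.lt_ge_cases j r1).
  - apply (in_colspace_widen _ r1); [lia|]. now apply Vcan_cols1.
  - apply (in_colspace_shift _ r1' r2); [lia|].
    apply (in_colspace_ext _ _ _ (fun i => Vcan i (r1' + (j - r1'))%nat)).
    + intros i _. now replace (r1' + (j - r1'))%nat with j by lia.
    + apply Vcan_cols2. lia.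
Qed.

Lemma Vcan_structured : structured_basis n m1 m2 r1 r2 r U Vcan.
Proof.
  pose proof (pivot_pattern_lin_indep1 _ Vcan_pattern) as Hind1.
  pose proof (pivot_pattern_lin_indep2 _ Vcan_pattern) as Hind2.
  assert (B1 : is_colbasis n r1 Vcan m1 (view1 U)).
  { apply Mx.colbasis_of_lin_indep; auto. intros j Hj.
    apply (Mx.in_colspace_trans n r1 W); [now apply Vcan_cols1|apply W_cols1]. }
  assert (B2 : is_colbasis n r2 (fun i j => Vcan i (r1' + j)%nat) m2 (view2 m1 U)).
  { apply Mx.colbasis_of_lin_indep; auto. intros j Hj.
    apply (Mx.in_colspace_trans n r2 W_shift); [now apply Vcan_cols2|apply W_cols2]. }
  split; [exact B1|split; [exact B2|]].
  assert (Hcols : forall j, (j < r)%nat -> in_colspace n (m1 + m2) U (fun i => Vcan i j)).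
  { intros j Hj. apply (Mx.in_colspace_trans n r W); [now apply Vcan_cols|apply W_cols]. }
  apply Mx.colbasis_of_lin_indep; auto.
  apply (Mx.lin_indep_of_spanning _ _ _ (m1 + m2) U); auto. intros j Hj.
  destruct B1 as (_ & _ & Hspan1), B2 as (_ & _ & Hspan2).
  destruct (Nat.lt_ge_cases j m1).
  - apply (in_colspace_widen _ r1); [lia|]. apply Hspan1. now apply Mx.col_in_colspace.
  - apply (in_colspace_shift _ r1' r2); [unfold r1'; lia|].
    apply (in_colspace_ext _ _ _ (fun i => view2 m1 U i (j - m1)%nat)).
    + intros i _. unfold view2. now replace (m1 + (j - m1))%nat with j by lia.
    + apply Hspan2, Mx.col_in_colspace. lia.
Qed.

Section Uniqueness.
Variable Z : mat.
Hypotheses (HZ : structured_basis n m1 m2 r1 r2 r U Z) (HZpat : canonical_pattern r1 r2 r Z).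

Lemma Z_cols1 j : (j < r1)%nat -> in_colspace n r1 W (fun i => Z i j).
Proof.
  intros Hj. destruct HZ as ((Hcol & _) & _).
  apply (Mx.in_colspace_trans n m1 (view1 U)); [now apply Hcol|].
  intros l Hl. exists (fun k => G1 k l). intros i Hi.
  rewrite view1_factor by auto. apply sumR_ext. intros; ring.
Qed.

Lemma Z_cols2 j : (j < r2)%nat -> in_colspace n r2 W_shift (fun i => Z i (r1' + j)%nat).
Proof.
  intros Hj. destruct HZ as (_ & (Hcol & _) & _).
  apply (Mx.in_colspace_trans n m2 (view2 m1 U)); [now apply Hcol|].
  intros l Hl. exists (fun k => G2 k l). intros i Hi.
  rewrite view2_factor by auto. apply sumR_ext. intros; ring.
Qed.

Lemma Z_eq_Vcan i j : (i < n)%nat -> (j < r)%nat -> Z i j = Vcan i j.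
Proof.
  destruct dims as (E1 & E2 & E3 & E4 & E5 & E6).
  apply canonical_patternE in HZpat as (P1 & P2 & P3). intros Hi Hj. unfold Vcan.
  destruct (Nat.lt_ge_cases j r1') as [Hj1|Hj1]; [|destruct (Nat.lt_ge_cases j r1) as [Hj2|Hj2]].
  - rewrite ltb_true by auto.
    apply (normalize_unique n r1 W pivot1 j (fun i => Z i j)); auto using pivot1_lt;
      [lia|apply Z_cols1; lia].
  - rewrite ltb_false, ltb_true by lia.
    pose proof (Z_cols1 j Hj2) as H1. rewrite E1 in H1.
    pose proof (Z_cols2 (j - r1') ltac:(lia)) as H2. rewrite E2 in H2.
    replace (r1' + (j - r1'))%nat with j in H2 by lia.
    apply (normalize_unique n r' W_shift _ (j - r1') (fun i => Z i j)); auto; [lia|lia| |].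
    + apply (in_colspace_meet n r1' r' r2'); auto. rewrite <- E3. apply W_lin_indep.
    + intros a Ha. rewrite <- P2 by lia. now replace (r1' + (j - r1'))%nat with j by lia.
  - rewrite ltb_false, ltb_false by lia.
    pose proof (Z_cols2 (j - r1') ltac:(lia)) as H2.
    replace (r1' + (j - r1'))%nat with j in H2 by lia.
    apply (normalize_unique n r2 W_shift pivot2 (j - r1) (fun i => Z i j)); auto using pivot2_lt; [lia|].
    intros a Ha. rewrite <- P3 by lia. now replace (r1 + (j - r1))%nat with j by lia.
Qed.

End Uniqueness.

Lemma unique_canonical_basis_of_minors : unique_canonical_basis n m1 m2 r1 r2 r U.
Proof.
  exists Vcan. split.
  - split; [exact Vcan_structured|]. apply canonical_patternE, Vcan_pattern.
  - intros Z [HZ HZpat] i j Hi Hj. now apply Z_eq_Vcan.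
Qed.

End CanonicalBasis.

Lemma row_major_inj r u b u' b' :
  (b < r)%nat -> (b' < r)%nat -> (u * r + b = u' * r + b')%nat -> u = u' /\ b = b'.
Proof.
  intros Hb Hb' E.
  assert (Hu : u = ((u * r + b) / r)%nat) by (apply (Nat.div_unique _ _ _ b); lia).
  assert (Hu' : u' = ((u' * r + b') / r)%nat) by (apply (Nat.div_unique _ _ _ b'); lia).
  assert (u = u') as <- by (rewrite Hu, Hu', E; reflexivity). split; [reflexivity|lia].
Qed.

Lemma minor_det_null N n r k o (piv : nat -> nat) :
  (1 <= N)%nat -> (n * r <= N)%nat -> (o + k <= r)%nat ->
  (forall a, (a < k)%nat -> (piv a < n)%nat) ->
  (forall a a', (a < k)%nat -> (a' < k)%nat -> piv a = piv a' -> a = a') ->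
  null_set N (fun x => Mx.detR k (fun a b => x (piv a * r + (o + b))%nat) = 0).
Proof.
  intros HN Hnr Hok Hlt Hinj. apply det_of_coords_zero_null; auto.
  - intros a b Ha Hb. specialize (Hlt a Ha). nia.
  - intros a b a' b' Ha Hb Ha' Hb' E.
    apply row_major_inj in E as [Hrow Hcol]; [|lia|lia]. split; [now apply Hinj|lia].
Qed.

Theorem proposition2 :
  forall n m1 m2 r r1 r2 : nat,
    (1 <= n)%nat -> (1 <= m1)%nat -> (1 <= m2)%nat ->
    (1 <= r1)%nat -> (1 <= r2)%nat -> (r1 <= r)%nat -> (r2 <= r)%nat ->
    (r <= n)%nat -> (r <= r1 + r2)%nat ->
    null_set (param_dim n m1 m2 r1 r2 r)
      (fun x =>
         let U := param_U n m1 m2 r1 r2 r x in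
         rank_eq n m1 (view1 U) r1 /\
         rank_eq n m2 (view2 m1 U) r2 /\
         rank_eq n (m1 + m2) U r /\
         ~ unique_canonical_basis n m1 m2 r1 r2 r U).
Proof.
  intros n m1 m2 r r1 r2 Hn Hm1 Hm2 Hr1 Hr2 Hr1r Hr2r Hrn Hrr.
  destruct (dims n r r1 r2) as (E1 & E2 & E3 & E4 & E5 & E6); auto.
  assert (HN : (1 <= param_dim n m1 m2 r1 r2 r)%nat) by (unfold param_dim; nia).
  assert (HnrN : (n * r <= param_dim n m1 m2 r1 r2 r)%nat) by (unfold param_dim; lia).
  apply null_set_subset with (fun x =>
    Mx.detR r1 (pivot_minor (W r x) (pivot1 r r1 r2)) = 0 \/
    Mx.detR (r' r r1 r2) (pivot_minor (W_shift r r2 x) (fun a => M r r1 r2 + a)%nat) = 0 \/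
    Mx.detR r2 (pivot_minor (W_shift r r2 x) (pivot2 r r1 r2)) = 0).
  - intros x (H1 & H2 & H3 & Hnot).
    apply NNPP. intros Hminors. apply Hnot.
    apply unique_canonical_basis_of_minors; auto; intros Hd; apply Hminors; tauto.
  - repeat apply null_set_union.
    + apply (minor_det_null _ n r r1 0); auto.
      * intros a Ha. now apply pivot1_lt.
      * intros a a' Ha Ha'. now apply (pivot1_inj n).
    + apply (minor_det_null _ n r (r' r r1 r2) (r1' r r2)); auto; lia.
    + apply (minor_det_null _ n r r2 (r1' r r2)); auto; [lia| |].
      * intros a Ha. now apply pivot2_lt.
      * intros a a' Ha Ha'. now apply (pivot2_inj n).
Qed.
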